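(* Let $K$ be an infinite field, let $n\geq 5$ and $r$ be integers with $1<r<n-2$, and let $p(x,y)=[x,y]^r=(xy-yx)^r\in K\langle x,y\rangle$. Then $\mathrm{ord}(p)=r$ and $p(T_n(K))\neq T_n(K)^{(r-1)}$.
   Context: $T_n(K)$ denotes the algebra of $n\times n$ upper triangular matrices over $K$; $T_n(K)^{(t)}$ denotes the set of upper triangular matrices whose $(i,j)$ entries vanish whenever $j-i\leq t$. $p(T_n(K))=\{p(a,b):a,b\in T_n(K)\}$. The order $\mathrm{ord}(p)$ is the least positive integer $r$ with $p(T_r(K))=\{0\}$ but $p(T_{r+1}(K))\neq\{0\}$ (with $T_1(K)=K$). *)

From HB Require Import structures.
From mathcomp Require Import all_boot all_order all_algebra.
Set Implicit Arguments. Unset Strict Implicit. Unset Printing Implicit Defensive.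
Import GRing.Theory.
Local Open Scope ring_scope.

Section Defs.
Variable K : fieldType.

Definition upper_tri (n : nat) (A : 'M[K]_n) : Prop :=
  forall i j : 'I_n, (j < i)%N -> A i j = 0.

Definition upper_tri_t (t n : nat) (A : 'M[K]_n) : Prop :=
  upper_tri A /\ forall i j : 'I_n, (j <= i + t)%N -> A i j = 0.

Definition commpow (r n : nat) (a b : 'M[K]_n) : 'M[K]_n :=
  (a *m b - b *m a) ^+ r.

Definition in_image_p (r n : nat) (A : 'M[K]_n) : Prop :=
  exists a b : 'M[K]_n, upper_tri a /\ upper_tri b /\ A = commpow r a b.

Definition p_vanishes (r m : nat) : Prop :=
  forall a b : 'M[K]_m, upper_tri a -> upper_tri b -> commpow r a b = 0.

Definition ord_cond (r q : nat) : Prop := p_vanishes r q /\ ~ p_vanishes r q.+1.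
Definition ord_is (r q : nat) : Prop :=
  (0 < q)%N /\ ord_cond r q /\ forall m : nat, (0 < m < q)%N -> ~ ord_cond r m.
End Defs.

From mathcomp Require Import all_boot all_order all_algebra.
From mathcomp Require Import zify.
Local Open Scope ring_scope.
Import GRing.Theory.
Set Implicit Arguments. Unset Strict Implicit. Unset Printing Implicit Defensive.

(* For upper triangular a, b the commutator c = ab - ba is strictly upper
   triangular.  Powers of a strictly upper triangular c are controlled by its
   first superdiagonal: c^k vanishes below the k-th superdiagonal, and its
   entry (i, i + k) is the product of the k consecutive superdiagonal
   entries c(i+t, i+t+1), t < k.
   * Hence [a, b]^r = 0 in T_m(K) for m <= r, while in T_(r+1)(K) the pair
     a = diag(0, 1, ..., r), b = shift gives a commutator with superdiagonal
     -1, so the corner entry of [a, b]^r is (-1)^r <> 0; thus ord(p) = r.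
   * If r >= 2 and c^r has nonzero entries (0, r) and (2, r+2), then the two
     windows of superdiagonal entries cover the window for (1, r+1), so that
     entry is nonzero too.  The matrix e_(0,r) + e_(2,r+2) lies in
     T_n(K)^(r-1) but violates this, so p(T_n(K)) <> T_n(K)^(r-1). *)

Section StrictlyUpperPowers.
Variable K : fieldType.

Definition strictly_upper n (c : 'M[K]_n) :=
  forall i j : 'I_n, (j <= i)%N -> c i j = 0.

Lemma strictly_upper_pow_lower n (c : 'M[K]_n) : strictly_upper c ->
  forall k (i j : 'I_n), (j < i + k)%N -> (c ^+ k) i j = 0.
Proof.
move=> sc; elim=> [|k IH] i j hij.
  rewrite expr0 -idmxE mxE.
  case: eqP => [e|_]; last by rewrite mulr0n.
  by move: hij; rewrite e addn0 ltnn.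
rewrite exprSr -mulmxE mxE big1 // => l _.
case: (ltnP l (i + k)) => hl; first by rewrite IH // mul0r.
by rewrite sc ?mulr0 //; lia.
Qed.

Lemma strictly_upper_pow_superdiag n (c : 'M[K]_n.+1) : strictly_upper c ->
  forall k (i j : 'I_n.+1), nat_of_ord j = (i + k)%N ->
  (c ^+ k) i j = \prod_(t < k) c (inord (i + t)) (inord (i + t).+1).
Proof.
move=> sc; elim=> [|k IH] i j hij.
  rewrite expr0 big_ord0 -idmxE mxE.
  have -> : i = j by apply: val_inj; rewrite /= hij addn0.
  by rewrite eqxx.
have hik : (i + k < n.+1)%N by have := ltn_ord j; lia.
rewrite exprSr -mulmxE mxE (bigD1 (inord (i + k))) //= big1 ?addr0.
  rewrite (IH i) ?inordK // big_ord_recr /=.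
  congr (_ * _); congr (c _ _).
  by apply: val_inj; rewrite /= inordK ?hij ?addnS //; have := ltn_ord j; lia.
move=> l /eqP hl.
have hl' : nat_of_ord l <> (i + k)%N by move=> e; apply: hl; apply: val_inj; rewrite /= inordK.
case: (ltnP l (i + k)) => hl2; first by rewrite strictly_upper_pow_lower // mul0r.
by rewrite sc ?mulr0 //; lia.
Qed.

Lemma strictly_upper_pow_superdiag_neq0 n (c : 'M[K]_n.+1) (i k : nat) :
  strictly_upper c -> (i + k < n.+1)%N ->
  (c ^+ k) (inord i) (inord (i + k)) != 0 <->
  (forall t, (t < k)%N -> c (inord (i + t)) (inord (i + t).+1) != 0).
Proof.
move=> sc hik; rewrite (strictly_upper_pow_superdiag sc (k := k)) ?inordK //; try lia.
rewrite prodf_seq_neq0; split.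
- by move=> /allP H t ht; exact: H (Ordinal ht) (mem_index_enum _).
- by move=> H; apply/allP => t _; apply: H.
Qed.

(* Two windows of length r >= 2 starting at i and i+2 cover the window
   starting at i+1, so nonzero corner entries of c^r at rows i and i+2
   force a nonzero entry at row i+1. *)
Lemma strictly_upper_pow_gap n (c : 'M[K]_n.+1) (i r : nat) :
  strictly_upper c -> (2 <= r)%N -> (i + r + 2 < n.+1)%N ->
  (c ^+ r) (inord i) (inord (i + r)) != 0 ->
  (c ^+ r) (inord (i + 2)) (inord (i + 2 + r)) != 0 ->
  (c ^+ r) (inord i.+1) (inord (i.+1 + r)) != 0.
Proof.
move=> sc hr hn /strictly_upper_pow_superdiag_neq0 W0 /strictly_upper_pow_superdiag_neq0 W2.
apply/strictly_upper_pow_superdiag_neq0 => //; first lia.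
move=> t ht; case: (ltnP t.+1 r) => h.
  by have := W0 sc ltac:(lia) t.+1 h; rewrite addnS addSn.
have := W2 sc ltac:(lia) (t - 1)%N ltac:(lia).
by have -> : (i + 2 + (t - 1) = i.+1 + t)%N by lia.
Qed.

End StrictlyUpperPowers.

Section Commutators.
Variable K : fieldType.

Lemma upper_tri_mul_lower n (a b : 'M[K]_n) : upper_tri a -> upper_tri b ->
  forall i j : 'I_n, (j <= i)%N -> (a *m b) i j = a i i * b i j.
Proof.
move=> ua ub i j hij; rewrite mxE (bigD1 i) //= big1 ?addr0 // => l /eqP hl.
have hl' : nat_of_ord l <> nat_of_ord i by move=> e; apply: hl; apply: val_inj.
case: (ltnP l i) => h; first by rewrite ua // mul0r.
by rewrite ub ?mulr0 //; lia.
Qed.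

(* The commutator of two upper triangular matrices is strictly upper
   triangular (the diagonal of T_n(K) is commutative). *)
Lemma commutator_strictly_upper n (a b : 'M[K]_n) : upper_tri a -> upper_tri b ->
  strictly_upper (a *m b - b *m a).
Proof.
move=> ua ub i j hij.
rewrite mxE [(- (b *m a)) _ _]mxE !upper_tri_mul_lower //.
case: (ltnP j i) => h; first by rewrite (ua i j h) (ub i j h) !mulr0 subrr.
have -> : j = i by apply: val_inj; apply/eqP; rewrite eqn_leq h hij.
by rewrite mulrC subrr.
Qed.

Lemma commpow_vanishes r m : (m <= r)%N -> p_vanishes K r m.
Proof.
move=> hm a b ua ub; apply/matrixP => i j; rewrite mxE /commpow.
rewrite (strictly_upper_pow_lower (commutator_strictly_upper ua ub)) //.
have := ltn_ord j; lia.
Qed.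

Definition ramp_mx m : 'M[K]_m := \matrix_(i, j) if i == j then (i : nat)%:R else 0.
Definition shift_mx m : 'M[K]_m := \matrix_(i, j) if (j == i.+1 :> nat) then 1 else 0.

Lemma ramp_mx_upper m : upper_tri (ramp_mx m).
Proof. by move=> i j h; rewrite mxE; case: eqP => // e; move: h; rewrite e ltnn. Qed.

Lemma shift_mx_upper m : upper_tri (shift_mx m).
Proof. by move=> i j h; rewrite mxE; case: eqP => // e; lia. Qed.

(* [ramp, shift] has every first superdiagonal entry equal to t - (t+1) = -1. *)
Lemma ramp_shift_commutator_superdiag m t : (t < m)%N ->
  (ramp_mx m.+1 *m shift_mx m.+1 - shift_mx m.+1 *m ramp_mx m.+1)
    (inord t) (inord t.+1) = -1.
Proof.
move=> ht.
have e1 : (ramp_mx m.+1 *m shift_mx m.+1) (inord t) (inord t.+1) = t%:R.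
  rewrite mxE (bigD1 (inord t)) //= big1 ?addr0 => [|l hl].
    by rewrite !mxE eqxx !inordK //= ?eqxx ?mulr1 //; lia.
  rewrite mxE; case: eqP => [e|_]; last by rewrite mul0r.
  by rewrite e eqxx in hl.
have e2 : (shift_mx m.+1 *m ramp_mx m.+1) (inord t) (inord t.+1) = t.+1%:R.
  rewrite mxE (bigD1 (inord t.+1)) //= big1 ?addr0 => [|l hl].
    by rewrite !mxE eqxx !inordK //= ?eqxx ?mul1r //; lia.
  rewrite [ramp_mx _ l _]mxE; case: eqP => [e|_]; last by rewrite mulr0.
  by rewrite e eqxx in hl.
by rewrite mxE [(- (_ *m _)) _ _]mxE e1 e2 -natr1 opprD addrA subrr add0r.
Qed.

(* p(T_(r+1)(K)) <> {0}: the corner entry of [ramp, shift]^r is (-1)^r. *)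
Lemma commpow_not_vanishes r : ~ p_vanishes K r r.+1.
Proof.
move=> /(_ _ _ (@ramp_mx_upper r.+1) (@shift_mx_upper r.+1)) /matrixP /(_ (inord 0) (inord r)).
rewrite mxE /commpow => /eqP; apply/negP.
apply/(strictly_upper_pow_superdiag_neq0 (i := 0) (k := r)).
- exact: commutator_strictly_upper (@ramp_mx_upper _) (@shift_mx_upper _).
- by rewrite add0n.
- by move=> t ht; rewrite add0n ramp_shift_commutator_superdiag // oppr_eq0 oner_eq0.
Qed.

Lemma commpow_order r : (0 < r)%N -> ord_is K r r.
Proof.
move=> hr; split; first done; split.
  by split; [exact: commpow_vanishes | exact: commpow_not_vanishes].
by move=> m hm [_ hv]; apply: hv; apply: commpow_vanishes; lia.
Qed.

Definition gap_mx n r : 'M[K]_n := \matrix_(i, j)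
  if ((i == 0 :> nat) && (j == r :> nat)) || ((i == 2 :> nat) && (j == r + 2 :> nat))
  then 1 else 0.

Lemma gap_mx_upper_tri_t n r : (0 < r)%N -> upper_tri_t (r - 1) (gap_mx n r).
Proof.
by move=> hr; split=> i j h; rewrite mxE; case: ifP => // /orP [] /andP [/eqP e1 /eqP e2]; lia.
Qed.

(* e_(0,r) + e_(2,r+2) is not a value of [x, y]^r on T_n(K) when r >= 2:
   its entry (1, r+1) vanishes, contradicting strictly_upper_pow_gap. *)
Lemma gap_mx_not_in_image n r : (2 <= r)%N -> (r + 2 < n.+1)%N ->
  ~ in_image_p r (gap_mx n.+1 r).
Proof.
move=> hr hn [a [b [ua [ub eA]]]].
have := strictly_upper_pow_gap (i := 0) (commutator_strictly_upper ua ub) hr.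
rewrite -/(commpow r a b) -eA !mxE !inordK ?add0n /=; try lia.
have -> : (2 + r == r + 2)%N by lia.
rewrite eqxx oner_eq0 /=.
by move/(_ hn isT isT); rewrite eqxx.
Qed.

End Commutators.

Theorem mainTheorem9 (K : fieldType)
  (K_infinite : forall s : seq K, exists x : K, x \notin s)
  (n r : nat) (hn : (5 <= n)%N) (hr1 : (1 < r)%N) (hr2 : (r < n - 2)%N) :
  ord_is K r r /\
  ~ (forall A : 'M[K]_n, in_image_p r A <-> upper_tri_t (r - 1) A).
Proof.
split; first by apply: commpow_order; lia.
case: n hn hr2 => // n _ hr2 image_eq.
have gap_bound : (r + 2 < n.+1)%N by lia.
apply: (gap_mx_not_in_image hr1 gap_bound).
by apply/image_eq/gap_mx_upper_tri_t; lia.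
Qed.
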